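(* Let $\mathcal{G}_n(\mathcal{X},\mathcal{Y},d,Q)$ be a position-optimization game (as defined in the context). If $\bm{x}$ is a pure strategy profile that covers $\mathcal{X}^*$, then for any player $i$, every strictly profitable deviation $x'$ (i.e. $x'\in\mathcal{X}$ with $u_i(x',\bm{x}_{-i})>u_i(x_i,\bm{x}_{-i})$) satisfies $x'\in\mathcal{X}^*$.
   Context: Position-optimization game: $\mathcal{X}$ is an arbitrary set of positions, $\mathcal{Y}$ an arbitrary set of targets, $d:\mathcal{X}\times\mathcal{Y}\to[0,\infty]$ a proximity function. For $y\in\mathcal{Y}$ let $x^*(y)=\arg\min_{x\in\mathcal{X}} d(x,y)$, and $\mathcal{X}^*=\bigcup_{y\in\mathcal{Y}}x^*(y)$ (pseudo-targets). $Q$ is a probability distribution on $\mathcal{Y}$ with $Q(\{y:|x^*(y)|>1\})=0$ and $|\mathcal{X}^*|<\infty$. In the game $\mathcal{G}_n(\mathcal{X},\mathcal{Y},d,Q)$, players $i\in[n]$ choose positions $x_i\in\mathcal{X}$, $\bm{x}=(x_1,\dots,x_n)$; with $X_{\min}(\bm{x},y)=\arg\min_{x_i\in\bm{x}} d(x_i,y)$, player $i$'s utility is $u_i(x_i,\bm{x}_{-i})=\mathbb{E}_{y\sim Q}\big[\mathbb{1}[x_i\in X_{\min}(\bm{x},y)]/|X_{\min}(\bm{x},y)|\big]$. $k_{\bm{x}}(x)$ is the number of players at position $x$; $\bm{x}$ covers $\mathcal{X}^*$ if $k_{\bm{x}}(x)\ge1$ for all $x\in\mathcal{X}^*$. *)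

From HB Require Import structures.
From mathcomp Require Import all_boot all_order all_algebra.
From mathcomp Require Import all_classical all_reals all_analysis.
From mathcomp Require Import measurable_realfun.
Set Implicit Arguments. Unset Strict Implicit. Unset Printing Implicit Defensive.
Import Order.TTheory GRing.Theory Num.Theory.
Local Open Scope classical_set_scope.
Local Open Scope ring_scope.

Section PositionGame.
Context {X : Type} {dY : measure_display} {Y : measurableType dY} {R : realType}.
Variable dist : X -> Y -> \bar R.

Definition xstar (y : Y) : set X :=
  [set x | forall x', (dist x y <= dist x' y)%E].

Definition Xstar : set X := \bigcup_(y in setT) xstar y.

Definition multi_argmin : set Y :=
  [set y | exists x1 x2, xstar y x1 /\ xstar y x2 /\ x1 <> x2].

Variable n : nat.

Definition Xmin (xs : 'I_n -> X) (y : Y) : {set 'I_n} :=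
  [set j | [forall k, (dist (xs j) y <= dist (xs k) y)%E]].

Definition payoff (xs : 'I_n -> X) (i : 'I_n) (y : Y) : R :=
  if i \in Xmin xs y then (#|Xmin xs y|%:R)^-1 else 0.

Definition utility (Q : probability Y R) (xs : 'I_n -> X) (i : 'I_n) : \bar R :=
  (\int[Q]_y (payoff xs i y)%:E)%E.

Definition deviate (xs : 'I_n -> X) (i : 'I_n) (x' : X) : 'I_n -> X :=
  fun j => if j == i then x' else xs j.

(* k_x(x) >= 1 for all x in X^* *)
Definition covers (xs : 'I_n -> X) : Prop :=
  forall x, Xstar x -> exists j, xs j = x.

End PositionGame.

From HB Require Import structures.
From mathcomp Require Import all_boot all_order all_algebra.
From mathcomp Require Import all_classical all_reals all_analysis.
From mathcomp Require Import measurable_realfun.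
Import Order.TTheory GRing.Theory Num.Theory.
Local Open Scope classical_set_scope.
Local Open Scope ring_scope.

(* The comparison is pointwise in the target y.  If x' is not a closest
   position to y, some closest position x_m is strictly closer, and x_m is
   occupied by some player j.  After deviating to x', player i can only still
   be among the closest players if j = i; but then, before deviating, i sat
   alone at x_m strictly closer than everybody else and collected the whole
   unit payoff.  Hence deviating to x' never increases the payoff at any y,
   and integrating over y it never increases the utility. *)

(* No measurability is needed: the integral of a nonnegative function is the
   supremum of the integrals of the simple functions below it. *)
Lemma ge0_le_integralT d (T : measurableType d) (R : realType)
    (mu : {measure set T -> \bar R}) (f g : T -> \bar R) :
  (forall t, (0 <= f t)%E) -> (forall t, (f t <= g t)%E) ->
  (\int[mu]_t f t <= \int[mu]_t g t)%E.
Proof.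
move=> f_ge0 le_fg.
have g_ge0 t : (0 <= g t)%E by exact: le_trans (f_ge0 t) (le_fg t).
rewrite !ge0_integralTE //.
apply: ereal_sup_le => _ [h le_hf <-]; exists h => //= t.
exact: le_trans (le_hf t) (le_fg t).
Qed.

Section PayoffComparison.
Set Implicit Arguments. Unset Strict Implicit.
Variables (X : Type) (dY : measure_display) (Y : measurableType dY).
Variables (R : realType) (d : X -> Y -> \bar R) (n : nat).
Implicit Types (xs : 'I_n -> X) (i j k : 'I_n) (y : Y) (x : X).

Lemma payoff_ge0 xs i y : 0 <= payoff d xs i y.
Proof. by rewrite /payoff; case: ifP => // _; rewrite invr_ge0. Qed.

Lemma payoff_le1 xs i y : payoff d xs i y <= 1.
Proof.
rewrite /payoff; case: ifP => [i_min|_]; last exact: ler01.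
by rewrite invf_le1 ?ltr0n ?ler1n card_gt0; apply/set0Pn; exists i.
Qed.

Lemma payoff_unique_closest xs i y :
  (forall k, k != i -> (d (xs i) y < d (xs k) y)%E) -> payoff d xs i y = 1.
Proof.
move=> closest; rewrite /payoff.
have -> : Xmin d xs y = [set i]%SET.
  apply/setP => k; rewrite !inE; apply/forallP/eqP => [k_min|-> l].
    apply/eqP; apply: contraT => /closest; rewrite ltNge.
    by move: (k_min i) => ->.
  by have [->|/closest/ltW] := eqVneq l i.
by rewrite set11 cards1 invr1.
Qed.

Lemma deviate_self xs i x : deviate xs i x i = x.
Proof. by rewrite /deviate eqxx. Qed.

Lemma deviate_other xs i j x : j != i -> deviate xs i x j = xs j.
Proof. by rewrite /deviate => /negbTE ->. Qed.

Lemma exists_closer_of_not_xstar y x :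
  ~ xstar d y x -> exists z, (d z y < d x y)%E.
Proof.
move=> not_min; apply: contrapT => no_closer; apply: not_min => z.
by rewrite leNgt; apply/negP => lt_zx; apply: no_closer; exists z.
Qed.

Lemma payoff_deviate_le xs i j y x' :
  xstar d y (xs j) -> ~ xstar d y x' ->
  payoff d (deviate xs i x') i y <= payoff d xs i y.
Proof.
move=> j_min x'_not_min.
have [|i_notmin] := boolP (i \in Xmin d (deviate xs i x') y); last first.
  by rewrite /payoff (negbTE i_notmin) payoff_ge0.
rewrite inE => /forallP i_min.
have [z lt_zx'] := exists_closer_of_not_xstar x'_not_min.
have lt_jx' : (d (xs j) y < d x' y)%E := le_lt_trans (j_min z) lt_zx'.
have ji : j = i.
  apply/eqP; apply: contraT => j_neq_i; move: (i_min j).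
  by rewrite deviate_self deviate_other // leNgt lt_jx'.
subst j; rewrite (@payoff_unique_closest xs); first exact: payoff_le1.
move=> k k_neq_i; apply: lt_le_trans lt_jx' _.
by move: (i_min k); rewrite deviate_self deviate_other.
Qed.

End PayoffComparison.

Theorem lemma2 (X : Type) (dY : measure_display) (Y : measurableType dY)
  (R : realType) (d : X -> Y -> \bar R) (Q : probability Y R) (n : nat)
  (d_ge0 : forall x y, (0 <= d x y)%E)
  (d_meas : forall x, measurable_fun setT (d x))
  (argmin_ex : forall y, exists x, xstar d y x)
  (Q_uniq : Q.-negligible (multi_argmin d))
  (Xstar_fin : finite_set (Xstar d))
  (xs : 'I_n -> X) (cov : covers d xs) :
  forall (i : 'I_n) (x' : X),
    (utility d Q xs i < utility d Q (deviate xs i x') i)%E -> Xstar d x'.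
Proof.
move=> i x' profitable; apply: contrapT => x'_notin_Xstar.
move: profitable; apply/negP; rewrite -leNgt.
apply: ge0_le_integralT => y; rewrite lee_fin; first exact: payoff_ge0.
have [xm xm_min] := argmin_ex y.
have [j occupied] : exists j, xs j = xm by apply: cov; exists y.
rewrite -occupied in xm_min.
apply: (payoff_deviate_le i xm_min) => x'_min.
by apply: x'_notin_Xstar; exists y.
Qed.
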